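(* Every BMDP $\mathcal B$ has an optimal static strategy: there is a static strategy $\sigma^*$ such that $\mathrm{ETotal}_*(q,\sigma^* )=\mathrm{ETotal}_*(q)$ for every type $q\in\mathcal T$.
   Context: A branching Markov decision process (BMDP) is a tuple $\mathcal B=(\mathcal T,A,p,c)$ where $\mathcal T$ is a finite set of types, $A$ is a finite set of actions, $p:\mathcal T\times A\to \mathrm{Dist}(\mathcal T^* )$ is a partial function assigning to some pairs $(q,a)$ a probability distribution with finite support over the set $\mathcal T^*$ of finite lists of types, and $c:\mathcal T\times A\to\mathbb R_{>0}$ is a cost function with strictly positive values. $A(q)$ denotes the (nonempty) set of actions $a$ for which $p(q,a)$ is defined. For a list $\alpha$, $|\alpha|$ is its length and $\alpha_i$ its $i$-th element; $\varepsilon$ is the empty list. Semantics: the BMDP induces an MDP whose states are lists $\alpha\in\mathcal T^*$. In state $\alpha$ the enabled actions are pairs $(i,a)$ with $1\le i\le|\alpha|$ and $a\in A(\alpha_i)$; taking $(i,a)$ incurs cost $c(\alpha_i,a)$ and moves to $\alpha_1\cdots\alpha_{i-1}\cdot\beta\cdot\alpha_{i+1}\cdots\alpha_{|\alpha|}$ with probability $p(\alpha_i,a)(\beta)$. The state $\varepsilon$ has no actions and is absorbing with no further cost. A strategy maps each finite history to a probability distribution over actions enabled in its last state; a strategy $\sigma$ and initial state $\alpha$ induce a probability measure on runs. $\mathrm{ETotal}_N(\alpha,\sigma)$ is the expected sum of costs in the first $N$ steps, $\mathrm{ETotal}_*(\alpha,\sigma)=\lim_{N\to\infty}\mathrm{ETotal}_N(\alpha,\sigma)\in[0,\infty]$,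 and $\mathrm{ETotal}_*(\alpha)=\inf_\sigma\mathrm{ETotal}_*(\alpha,\sigma)$ over all strategies. A strategy is static if there is a map $s:\mathcal T\to A$ with $s(q)\in A(q)$ such that, in every history whose last state $\alpha$ is nonempty, the strategy chooses (with probability 1) the action $(1,s(\alpha_1))$. *)

From HB Require Import structures.
From mathcomp Require Import all_boot all_order all_algebra.
From mathcomp Require Import all_classical all_reals all_analysis.
Set Implicit Arguments. Unset Strict Implicit. Unset Printing Implicit Defensive.
Import Order.TTheory GRing.Theory Num.Theory.
Local Open Scope ring_scope.

Section BMDP.
Variables (R : realType) (T A : finType).

(** A finite-support distribution over T^* (lists of types) is given by a
    finite list of (weight, list) pairs; the probability of beta is the total
    weight of the entries whose second component is beta. *)
Definition fdist := seq (R * seq T).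

Definition fdist_wf (d : fdist) : Prop :=
  (forall x, x \in d -> 0 <= x.1) /\ \sum_(x <- d) x.1 = 1.

(** BMDP (T, A, p, c): p q a = None means p(q,a) undefined (a \notin A(q)). *)
Definition BMDP_wf (p : T -> A -> option fdist) (c : T -> A -> R) : Prop :=
  [/\ forall q a d, p q a = Some d -> fdist_wf d,
      forall q, exists a, p q a <> None
    & forall q a, 0 < c q a].

(** Finite histories of the induced MDP: an initial state followed by the
    list of (action, next state) steps.  Actions (i,a) use 0-based positions
    i (position i here is position i+1 in the paper). *)
Definition hist := (seq T * seq ((nat * A) * seq T))%type.

Definition last_state (h : hist) : seq T := last h.1 [seq x.2 | x <- h.2].

Definition extend (h : hist) (ia : nat * A) (beta : seq T) : hist :=
  (h.1, rcons h.2 (ia, beta)).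

Definition succ_state (alpha : seq T) (i : nat) (beta : seq T) : seq T :=
  take i alpha ++ beta ++ drop i.+1 alpha.

(** A (randomized, history-dependent) strategy: sigma h i a is the
    probability of choosing action (i,a) after history h. *)
Definition strategy := hist -> nat -> A -> R.

Definition valid_strategy (p : T -> A -> option fdist) (sigma : strategy) : Prop :=
  forall h, last_state h != [::] ->
    [/\ forall i a, 0 <= sigma h i a,
        (forall i a, sigma h i a != 0 ->
           exists Hi : (i < size (last_state h))%N,
             p (tnth (in_tuple (last_state h)) (Ordinal Hi)) a <> None)
      & \sum_(i < size (last_state h)) \sum_(a : A) sigma h i a = 1].

Fixpoint ETotalN (p : T -> A -> option fdist) (c : T -> A -> R)
    (sigma : strategy) (N : nat) (h : hist) {struct N} : R :=
  match N with
  | 0 => 0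
  | N'.+1 =>
    let alpha := last_state h in
    \sum_(i < size alpha) \sum_(a : A)
      sigma h i a *
      match p (tnth (in_tuple alpha) i) a with
      | None => 0
      | Some d =>
          c (tnth (in_tuple alpha) i) a +
          \sum_(x <- d) x.1 *
             ETotalN p c sigma N' (extend h (val i, a) (succ_state alpha i x.2))
      end
  end.

Local Open Scope ereal_scope.

Definition ETotal_star p c (sigma : strategy) (alpha : seq T) : \bar R :=
  limn (fun N => (ETotalN p c sigma N (alpha, [::]))%:E).

Definition ETotal_opt p c (alpha : seq T) : \bar R :=
  ereal_inf [set ETotal_star p c sigma alpha | sigma in valid_strategy p].

Definition static_strategy (s : T -> A) : strategy :=
  fun h i a =>
    match last_state h with
    | [::] => 0%R
    | q :: _ => if (i == 0)%N && (a == s q) then 1%R else 0%R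
    end.

Definition static_choice (p : T -> A -> option fdist) (s : T -> A) : Prop :=
  forall q, p q (s q) <> None.

End BMDP.

From HB Require Import structures.
From mathcomp Require Import all_boot all_order all_algebra.
From mathcomp Require Import all_classical all_reals all_analysis.
From mathcomp Require Import lra.
Set Implicit Arguments. Unset Strict Implicit. Unset Printing Implicit Defensive.
Import Order.TTheory GRing.Theory Num.Theory.

(* Let vi k be value iteration, vi 0 = 0 and
     vi (k+1) q = min_{a enabled} c(q,a) + E_{beta ~ p(q,a)} sum_{t in beta} vi k t,
   and let value q = lim_k vi k q in [0, +oo] (the sequence is nondecreasing).
   - Lower bound: every strategy started in [q] costs at least vi k q.  Tag each
     entry of the current list with its depth in the derivation tree; the
     potential "truncated values vi (k - depth) of the pending entries, minus a
     penalty for pending work not yet covered by the elapsed steps" decreases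
     by at most the cost paid in each step, hence lies below ETotal_N; for N
     large the penalty of the initial list [q] vanishes.
   - Upper bound: value satisfies the Bellman inequality for some enabled
     action s q in each type (the finite minima of vi commute with the limit);
     the static strategy playing s then costs at most sum_{t in alpha} value t
     from any list alpha, by induction on the horizon.
   Together, ETotal_*(q, s) <= value q <= ETotal_*(q) <= ETotal_*(q, s). *)

Section ExtendedSums.
Variable R : realType.
Local Open Scope classical_set_scope.
Local Open Scope ereal_scope.

(* Finite sums of nonnegative limits pass to the limit (no -oo + +oo can occur). *)
Lemma cvge_sum (I : eqType) (s : seq I) (f : I -> nat -> \bar R) (l : I -> \bar R) :
  (forall i, i \in s -> 0 <= l i) -> (forall i, i \in s -> f i n @[n --> \oo] --> l i) ->
  \sum_(i <- s) f i n @[n --> \oo] --> \sum_(i <- s) l i.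
Proof.
elim: s => [|x s IH] l0 fl.
  by rewrite big_nil; under eq_fun do rewrite big_nil; exact: cvg_cst.
rewrite big_cons; under eq_fun do rewrite big_cons.
apply: cvgeD.
- apply: ge0_adde_def; rewrite inE; first by apply: l0; rewrite mem_head.
  by rewrite big_seq; apply: sume_ge0 => i iS; apply: l0; rewrite in_cons iS orbT.
- by apply: fl; rewrite mem_head.
- by apply: IH => i iS; [apply: l0 | apply: fl]; rewrite in_cons iS orbT.
Qed.

End ExtendedSums.

Local Open Scope ring_scope.

Section OptimalStatic.
Variables (R : realType) (T A : finType).
Variables (p : T -> A -> option (fdist R T)) (c : T -> A -> R).
Hypothesis wf : BMDP_wf p c.

Lemma weight_ge0 q a d x : p q a = Some d -> x \in d -> 0 <= x.1.
Proof. by case: wf => H _ _ Hd; case: (H _ _ _ Hd) => H1 _; apply: H1. Qed.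

Lemma weight_sum q a d : p q a = Some d -> \sum_(x <- d) x.1 = 1.
Proof. by case: wf => H _ _ Hd; case: (H _ _ _ Hd). Qed.

Lemma cost_pos q a : 0 < c q a.
Proof. by case: wf. Qed.

Lemma expect_shift (d : fdist R T) (C : R) (f : R * seq T -> R) :
  \sum_(x <- d) x.1 = 1 -> \sum_(x <- d) x.1 * (C + f x) = C + \sum_(x <- d) x.1 * f x.
Proof.
move=> d1; rewrite -[in RHS](mul1r C) -d1 mulr_suml -big_split /=.
by apply: eq_bigr => x _; rewrite mulrDr.
Qed.

Definition bellman (f : T -> R) q a : R :=
  if p q a is Some d then c q a + \sum_(x <- d) x.1 * \sum_(t <- x.2) f t else 0.

Lemma bellman_ge0 f q a : (forall t, 0 <= f t) -> 0 <= bellman f q a.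
Proof.
move=> f0; rewrite /bellman; case E: (p q a) => [d|] //.
apply: addr_ge0; first exact: ltW (cost_pos q a).
rewrite big_seq; apply: sumr_ge0 => x xd; apply: mulr_ge0; first exact: weight_ge0 E xd.
exact: sumr_ge0.
Qed.

Lemma bellman_mono f g q a : (forall t, f t <= g t) -> bellman f q a <= bellman g q a.
Proof.
move=> fg; rewrite /bellman; case E: (p q a) => [d|] //.
rewrite lerD2l big_seq [X in _ <= X]big_seq; apply: ler_sum => x xd.
by apply: ler_wpM2l; [exact: weight_ge0 E xd | exact: ler_sum].
Qed.

(* A fixed enabled action per type; it seeds the minima of value iteration. *)
Variable a0 : T -> A.
Hypothesis a0_enabled : forall q, p q (a0 q) <> None.

Lemma a0_enabledb q : isSome (p q (a0 q)).
Proof. by case E: (p q (a0 q)) => //; have := @a0_enabled q; rewrite E. Qed.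

(* Value iteration: vi k q is the least expected cost of the derivation tree of
   q truncated at depth k. *)
Fixpoint vi (k : nat) (q : T) : R :=
  if k is k'.+1 then
    \big[Num.min/bellman (vi k') q (a0 q)]_(a | isSome (p q a)) bellman (vi k') q a
  else 0.

Lemma vi_le_bellman k q a : isSome (p q a) -> vi k.+1 q <= bellman (vi k) q a.
Proof. by move=> Ha; rewrite /= (bigD1 a) //= ge_min lexx. Qed.

Lemma vi_gt k q r : (forall a, isSome (p q a) -> r < bellman (vi k) q a) -> r < vi k.+1 q.
Proof.
move=> H /=; apply: (big_ind (fun x => r < x)); last by move=> a /H.
- exact/H/a0_enabledb.
- by move=> x y rx ry; rewrite lt_min rx ry.
Qed.

Lemma vi_ge0 k q : 0 <= vi k q.
Proof.
elim: k q => [//|k IH] q /=; apply: (big_ind (fun x => 0 <= x)).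
- exact: bellman_ge0.
- by move=> x y x0 y0; rewrite le_min x0 y0.
- by move=> a _; apply: bellman_ge0.
Qed.

Lemma vi_mono k l q : (k <= l)%N -> vi k q <= vi l q.
Proof.
have vi_succ n t : vi n t <= vi n.+1 t.
  elim: n t => [|n IH] t; first exact: vi_ge0.
  rewrite [vi n.+2 t]/=; apply: (big_ind (fun x => vi n.+1 t <= x)).
  - exact/(le_trans (vi_le_bellman _ (a0_enabledb t)))/bellman_mono.
  - by move=> x y tx ty; rewrite le_min tx ty.
  - by move=> a Ha; exact/(le_trans (vi_le_bellman _ Ha))/bellman_mono.
move=> /subnK <-; elim: (l - k)%N => [|n IH] //.
by rewrite addSn; apply: le_trans IH (vi_succ _ _).
Qed.

Lemma vi_saturated k n t : (k <= n)%N -> vi (k - n) t = 0.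
Proof. by rewrite -subn_eq0 => /eqP ->. Qed.

Lemma last_extend (h : hist T A) ia b : last_state (extend h ia b) = b.
Proof. by rewrite /last_state /extend /= map_rcons last_rcons. Qed.

Lemma ord_size_neq0 (s : seq T) (i : 'I_(size s)) : s != [::].
Proof. by case: s i => [[]|]. Qed.

Lemma ETotalN_mono (sigma : strategy R T A) : valid_strategy p sigma ->
  forall N h, ETotalN p c sigma N h <= ETotalN p c sigma N.+1 h.
Proof.
move=> v; elim=> [|N IH] h /=.
  apply: sumr_ge0 => i _; apply: sumr_ge0 => a _.
  have [s0 _ _] := v h (ord_size_neq0 i).
  apply: mulr_ge0 => //; case: (p _ a) => [d|] //.
  rewrite big1 ?addr0; first exact: ltW (cost_pos _ _).
  by move=> x _; rewrite mulr0.
apply: ler_sum => i _; apply: ler_sum => a _.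
have [s0 _ _] := v h (ord_size_neq0 i).
apply: ler_wpM2l => //; case E: (p _ a) => [d|] //.
rewrite lerD2l big_seq [X in _ <= X]big_seq; apply: ler_sum => x xd.
by apply: ler_wpM2l; [exact: weight_ge0 E xd | exact: IH].
Qed.

(* One step of a valid strategy is a convex combination of enabled moves, so a
   bound below the cost-to-go of every enabled move bounds ETotal_{N+1}. *)
Lemma ETotalN_succ_ge (sigma : strategy R T A) N h (X : R) :
  valid_strategy p sigma -> last_state h != [::] ->
  (forall (i : 'I_(size (last_state h))) a d,
     p (tnth (in_tuple (last_state h)) i) a = Some d ->
     X <= c (tnth (in_tuple (last_state h)) i) a +
          \sum_(x <- d) x.1 *
             ETotalN p c sigma N (extend h (val i, a) (succ_state (last_state h) i x.2))) ->
  X <= ETotalN p c sigma N.+1 h.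
Proof.
move=> v ne H; have [s0 s_en s1] := v h ne.
rewrite [ETotalN _ _ _ N.+1 _]/= -[X]mulr1 -s1 mulr_sumr.
apply: ler_sum => i _; rewrite mulr_sumr; apply: ler_sum => a _.
rewrite mulrC; have [->|nz] := eqVneq (sigma h i a) 0; first by rewrite !mul0r.
apply: ler_wpM2l => //; have [Hi en] := s_en i a nz.
have iE : Ordinal Hi = i by apply: val_inj.
rewrite iE in en; case E: (p _ a) en => [d|] // _.
exact: H.
Qed.

Section Potential.
(* The truncation depth of the lower bound vi k q <= ETotal_*([q], sigma). *)
Variable k : nat.

Definition branch : nat := (\sum_(q : T) \sum_(a : A)
  (if p q a is Some d then \sum_(x <- d) size x.2 else 0))%N.

Lemma size_le_branch q a d x : p q a = Some d -> x \in d -> (size x.2 <= branch)%N.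
Proof.
move=> E xd; rewrite /branch (bigD1 q) //= (bigD1 a) //= E (big_rem x) //=.
by rewrite -!addnA leq_addr.
Qed.

(* budget d bounds the number of steps needed to expand an entry of depth d
   down to depth k: budget d = 1 + branch * budget (d+1), and 0 from depth k on. *)
Definition budget (d : nat) : R := \sum_(e < k - d) (branch%:R ^+ e).

Lemma budget_ge0 d : 0 <= budget d.
Proof. by apply: sumr_ge0 => e _; apply: exprn_ge0. Qed.

Lemma budget_saturated d : (k <= d)%N -> budget d = 0.
Proof. by move=> kd; rewrite /budget (eqP kd) big_ord0. Qed.

Lemma budget_rec d : (d < k)%N -> budget d = 1 + branch%:R * budget d.+1.
Proof.
move=> dk; rewrite /budget -(subnSK dk) big_ord_recl expr0 mulr_sumr.
by congr (_ + _); apply: eq_bigr => e _; rewrite exprS.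
Qed.

Lemma budget_ge1 d : (d < k)%N -> 1 <= budget d.
Proof. by move=> dk; rewrite budget_rec // lerDl mulr_ge0 ?budget_ge0. Qed.

(* Lists of entries tagged with their depth. *)
Definition trunc_value (z : seq (T * nat)) : R := \sum_(y <- z) vi (k - y.2) y.1.
Definition total_budget (z : seq (T * nat)) : R := \sum_(y <- z) budget y.2.

(* Constants of the potential: vbound bounds every truncated value, cmin every
   cost, and the rate rho <= 1 satisfies vbound * rho <= cmin. *)
Definition vbound : R := \sum_(t : T) vi k t.
Definition cmin : R := \big[Num.min/1]_(q : T) \big[Num.min/1]_(a : A) c q a.
Definition rho : R := cmin / (vbound + cmin).

Definition penalty (N : nat) (K : R) : R := Num.max 0 (K - rho * N%:R).
Definition potential (N : nat) (z : seq (T * nat)) : R :=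
  trunc_value z - vbound * penalty N (total_budget z).

Lemma cmin_pos : 0 < cmin.
Proof.
apply: (big_ind (fun x => 0 < x)) => //; first by move=> x y x0 y0; rewrite lt_min x0 y0.
move=> q _; apply: (big_ind (fun x => 0 < x)) => //; last by move=> a _; apply: cost_pos.
by move=> x y x0 y0; rewrite lt_min x0 y0.
Qed.

Lemma cmin_le q a : cmin <= c q a.
Proof. by rewrite /cmin (bigD1 q) //= ge_min (bigD1 a) //= ge_min lexx. Qed.

Lemma vbound_ge0 : 0 <= vbound.
Proof. by apply: sumr_ge0 => t _; apply: vi_ge0. Qed.

Lemma vi_le_vbound d t : vi (k - d) t <= vbound.
Proof.
apply: le_trans (vi_mono _ (leq_subr _ _)) _.
by rewrite /vbound (bigD1 t) //= lerDl sumr_ge0 // => u _; apply: vi_ge0.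
Qed.

Lemma rho_pos : 0 < rho.
Proof. by have := cmin_pos; have := vbound_ge0 => *; apply: divr_gt0 => //; lra. Qed.

Lemma rho_le1 : rho <= 1.
Proof. by have := cmin_pos; have := vbound_ge0 => *; rewrite ler_pdivrMr; lra. Qed.

Lemma vbound_rho : vbound * rho <= cmin.
Proof.
have := cmin_pos; have := vbound_ge0 => *.
rewrite mulrA ler_pdivrMr; [nra | lra].
Qed.

Lemma total_budget_ge0 z : 0 <= total_budget z.
Proof. by apply: sumr_ge0 => y _; apply: budget_ge0. Qed.

Lemma trunc_value_le z : trunc_value z <= vbound * total_budget z.
Proof.
rewrite /trunc_value /total_budget mulr_sumr; apply: ler_sum => y _.
have [yk|ky] := ltnP y.2 k; last by rewrite vi_saturated // budget_saturated // mulr0.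
by apply: le_trans (vi_le_vbound _ _) _; rewrite ler_peMr ?vbound_ge0 ?budget_ge1.
Qed.

Lemma penalty_decr N K K' : K' <= K - 1 -> penalty N K' <= penalty N.+1 K.
Proof.
move=> KK; have := rho_le1; rewrite /penalty -natr1 => r1.
by rewrite ge_max !le_max lexx /=; apply/orP; right; lra.
Qed.

Lemma penalty_shift N K : penalty N K <= penalty N.+1 K + rho.
Proof.
have r0 := rho_pos; rewrite /penalty -natr1 ge_max; apply/andP; split.
  by apply: addr_ge0; [rewrite le_max lexx | exact: ltW].
by rewrite -lerBlDr le_max; apply/orP; right; lra.
Qed.

Definition succ_tagged (y0 : T * nat) (z : seq (T * nat)) (i : nat) (b : seq T) :=
  take i z ++ [seq (t, (nth y0 z i).2.+1) | t <- b] ++ drop i.+1 z.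

Lemma sum_succ_tagged (f : T * nat -> R) y0 z i b : (i < size z)%N ->
  \sum_(y <- succ_tagged y0 z i b) f y =
  \sum_(y <- z) f y - f (nth y0 z i) + \sum_(t <- b) f (t, (nth y0 z i).2.+1).
Proof.
move=> Hi; rewrite -{2}(cat_take_drop i z) (drop_nth y0) //.
by rewrite /succ_tagged !big_cat big_cons big_map /=; lra.
Qed.

Lemma unzip1_succ_tagged y0 z i b :
  unzip1 (succ_tagged y0 z i b) = succ_state (unzip1 z) i b.
Proof.
rewrite /succ_tagged /succ_state /unzip1 !map_cat map_take map_drop -map_comp.
by rewrite map_id.
Qed.

Lemma trunc_value_succ y0 z i b : (i < size z)%N ->
  trunc_value (succ_tagged y0 z i b) = trunc_value z
    - vi (k - (nth y0 z i).2) (nth y0 z i).1 + \sum_(t <- b) vi (k - (nth y0 z i).2.+1) t.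
Proof. by move=> Hi; rewrite /trunc_value sum_succ_tagged. Qed.

Lemma total_budget_succ y0 z i b : (i < size z)%N ->
  total_budget (succ_tagged y0 z i b) =
    total_budget z - budget (nth y0 z i).2 + (size b)%:R * budget (nth y0 z i).2.+1.
Proof.
move=> Hi; rewrite /total_budget sum_succ_tagged //=; congr (_ + _).
elim: b => [|t b IH]; first by rewrite big_nil mul0r.
by rewrite big_cons IH /= -natr1 mulrDl mul1r addrC.
Qed.

Lemma total_budget_succ_shallow y0 z i a d x : (i < size z)%N ->
  ((nth y0 z i).2 < k)%N -> p (nth y0 z i).1 a = Some d -> x \in d ->
  total_budget (succ_tagged y0 z i x.2) <= total_budget z - 1.
Proof.
move=> Hi Hdk E xd; rewrite total_budget_succ // (budget_rec Hdk).
have b0 := budget_ge0 (nth y0 z i).2.+1.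
have : (size x.2)%:R * budget (nth y0 z i).2.+1 <= branch%:R * budget (nth y0 z i).2.+1.
  by rewrite ler_wpM2r // ler_nat (size_le_branch E xd).
lra.
Qed.

(* Above depth k, the value drop is paid for by the cost via the Bellman
   inequality, and the penalty does not grow. *)
Lemma potential_step_shallow N z i y0 a d : (i < size z)%N ->
  ((nth y0 z i).2 < k)%N -> p (nth y0 z i).1 a = Some d ->
  potential N.+1 z <=
    c (nth y0 z i).1 a + \sum_(x <- d) x.1 * potential N (succ_tagged y0 z i x.2).
Proof.
move=> Hi Hdk E; set q := (nth y0 z i).1; set dep := (nth y0 z i).2.
set P := vbound * penalty N.+1 (total_budget z).
have step x : x \in d -> trunc_value z - vi (k - dep) q - P +
    \sum_(t <- x.2) vi (k - dep.+1) t <= potential N (succ_tagged y0 z i x.2).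
  move=> xd; rewrite /potential trunc_value_succ // -/q -/dep.
  have : vbound * penalty N (total_budget (succ_tagged y0 z i x.2)) <= P.
    apply: ler_wpM2l; first exact: vbound_ge0.
    exact/penalty_decr/(total_budget_succ_shallow Hi Hdk E xd).
  lra.
have opt : vi (k - dep) q <= bellman (vi (k - dep.+1)) q a.
  by rewrite -(subnSK Hdk); apply: vi_le_bellman; rewrite E.
apply: le_trans (_ : _ <= c q a + \sum_(x <- d) x.1 *
    (trunc_value z - vi (k - dep) q - P + \sum_(t <- x.2) vi (k - dep.+1) t)) _.
  rewrite expect_shift ?(weight_sum E) // /potential -/P.
  by move: opt; rewrite /bellman E; lra.
rewrite lerD2l big_seq [X in _ <= X]big_seq; apply: ler_sum => x xd.
by apply: ler_wpM2l; [exact: weight_ge0 E xd | exact: step].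
Qed.

(* At depth >= k nothing changes but the elapsed time, whose penalty increase
   vbound * rho is paid for by the cost. *)
Lemma potential_step_deep N z i y0 a d : (i < size z)%N ->
  (k <= (nth y0 z i).2)%N -> p (nth y0 z i).1 a = Some d ->
  potential N.+1 z <=
    c (nth y0 z i).1 a + \sum_(x <- d) x.1 * potential N (succ_tagged y0 z i x.2).
Proof.
move=> Hi Hkd E; have Hkd1 := leqW Hkd.
have same b : potential N (succ_tagged y0 z i b) = potential N z.
  rewrite /potential trunc_value_succ // total_budget_succ // vi_saturated //.
  rewrite !budget_saturated // big1 => [|t _]; last exact: vi_saturated.
  by rewrite mulr0 !subr0 !addr0.
under eq_bigr do rewrite same.
rewrite -mulr_suml (weight_sum E) mul1r /potential.
have := ler_wpM2l vbound_ge0 (penalty_shift N (total_budget z)).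
have := vbound_rho; have := cmin_le (nth y0 z i).1 a.
rewrite mulrDr; lra.
Qed.

Lemma potential_step N z i y0 a d : (i < size z)%N -> p (nth y0 z i).1 a = Some d ->
  potential N.+1 z <=
    c (nth y0 z i).1 a + \sum_(x <- d) x.1 * potential N (succ_tagged y0 z i x.2).
Proof.
move=> Hi E; have [Hdk|Hkd] := ltnP (nth y0 z i).2 k.
- exact: potential_step_shallow.
- exact: potential_step_deep.
Qed.

Lemma nth_unzip1 (s : seq T) (z : seq (T * nat)) (i : 'I_(size s)) y0 :
  unzip1 z = s -> (i < size z)%N /\ (nth y0 z i).1 = tnth (in_tuple s) i.
Proof.
move=> zs; rewrite (tnth_nth y0.1) /=; have := ltn_ord i; move: (nat_of_ord i) => n.
by rewrite -zs /unzip1 size_map => Hn; rewrite (nth_map y0).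
Qed.

Lemma potential_le_ETotalN (sigma : strategy R T A) : valid_strategy p sigma ->
  forall N h z, unzip1 z = last_state h -> potential N z <= ETotalN p c sigma N h.
Proof.
move=> v; elim=> [|N IH] h z Hz.
  rewrite /= /potential /penalty mulr0 subr0 (max_r (total_budget_ge0 z)).
  by have := trunc_value_le z; lra.
have [E|ne] := eqVneq (last_state h) [::].
  have -> : z = [::] by move: Hz; rewrite E; case: z.
  rewrite /potential /penalty /trunc_value /total_budget !big_nil max_l.
    by rewrite mulr0 subrr /= big1 // => i; have := ord_size_neq0 i; rewrite {1}E.
  by rewrite sub0r oppr_le0 mulr_ge0 // ltW // rho_pos.
apply: ETotalN_succ_ge => // i a d E.
set y0 := (tnth (in_tuple (last_state h)) i, 0%N).
have [Hiz Hn] := nth_unzip1 i y0 Hz.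
have Ey : p (nth y0 z i).1 a = Some d by rewrite Hn.
apply: le_trans (potential_step N Hiz Ey) _.
rewrite Hn lerD2l big_seq [X in _ <= X]big_seq; apply: ler_sum => x xd.
apply: ler_wpM2l; first exact: weight_ge0 E xd.
by apply: IH; rewrite last_extend unzip1_succ_tagged Hz.
Qed.

(* Once rho * N exceeds the budget of the root, the initial potential is vi k q. *)
Lemma potential_init q :
  exists N, forall n, (N <= n)%N -> potential n [:: (q, 0%N)] = vi k q.
Proof.
have r0 := rho_pos; exists (Num.Def.archi_bound (budget 0 / rho)) => n Hn.
rewrite /potential /trunc_value /total_budget !big_seq1 subn0 /penalty max_l.
  by rewrite mulr0 subr0.
have := archi_boundP (divr_ge0 (budget_ge0 0) (ltW r0)); rewrite ltr_pdivrMr // => Hb.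
have : ((Num.Def.archi_bound (budget 0 / rho))%:R <= n%:R :> R) by rewrite ler_nat.
rewrite subr_le0; nra.
Qed.

End Potential.

Local Open Scope classical_set_scope.
Local Open Scope ereal_scope.

Definition value q : \bar R := limn (fun n => (vi n q)%:E).

Lemma vi_cvg q : cvgn (fun n => (vi n q)%:E).
Proof. by apply: ereal_nondecreasing_is_cvgn => n m nm; rewrite lee_fin vi_mono. Qed.

Lemma vi_le_value n q : (vi n q)%:E <= value q.
Proof.
apply: lime_ge; first exact: vi_cvg.
by exists n => // m /= nm; rewrite lee_fin vi_mono.
Qed.

Lemma value_ge0 q : 0 <= value q.
Proof. exact: (vi_le_value 0 q). Qed.

Lemma ETotalN_cvg (sigma : strategy R T A) al : valid_strategy p sigma ->
  cvgn (fun N => (ETotalN p c sigma N (al, [::]))%:E).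
Proof.
move=> v; apply: ereal_nondecreasing_is_cvgn.
by apply/nondecreasing_seqP => n; rewrite lee_fin ETotalN_mono.
Qed.

Lemma value_le_ETotal (sigma : strategy R T A) q : valid_strategy p sigma ->
  value q <= ETotal_star p c sigma [:: q].
Proof.
move=> v; apply: lime_le; first exact: vi_cvg.
exists 0%N => // k _ /=; apply: lime_ge; first exact: ETotalN_cvg.
have [N HN] := potential_init k q.
exists N => // n /= Nn; rewrite lee_fin -(HN n Nn).
exact: potential_le_ETotalN.
Qed.

Definition ebellman (f : T -> \bar R) q a : \bar R :=
  if p q a is Some d then (c q a)%:E + \sum_(x <- d) (x.1)%:E * \sum_(t <- x.2) f t
  else +oo.

Lemma bellman_cvg q a d : p q a = Some d ->
  (bellman (vi n) q a)%:E @[n --> \oo] --> ebellman value q a.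
Proof.
move=> E; rewrite /bellman /ebellman E.
under eq_fun do rewrite EFinD -sumEFin (eq_bigr _ (fun x _ => EFinM _ _)).
have Hge0 x : x \in d -> 0 <= (x.1)%:E * \sum_(t <- x.2) value t.
  by move=> xd; rewrite mule_ge0 ?lee_fin ?(weight_ge0 E xd) ?sume_ge0 // => t _; apply: value_ge0.
apply: cvgeD; [|exact: cvg_cst|].
- apply: ge0_adde_def; rewrite inE; first by rewrite lee_fin ltW ?cost_pos.
  by rewrite big_seq; apply: sume_ge0.
apply: cvge_sum => // x xd; apply: cvgeZl => //; under eq_fun do rewrite -sumEFin.
apply: cvge_sum => [t _|t _]; [exact: value_ge0 | exact: vi_cvg].
Qed.

Lemma ebellman_le q a r : isSome (p q a) ->
  (forall n, bellman (vi n) q a <= r)%R -> ebellman value q a <= r%:E.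
Proof.
case E: (p q a) => [d|] // _ Hr; rewrite -(cvg_lim (@ereal_hausdorff R) (bellman_cvg E)).
apply: lime_le; first by apply: ereal_nondecreasing_is_cvgn => n m nm;
  rewrite lee_fin bellman_mono // => t; apply: vi_mono.
by exists 0%N => // n _ /=; rewrite lee_fin.
Qed.

Definition bellman_optimal (s : T -> A) : Prop :=
  forall q, isSome (p q (s q)) /\ (value q != +oo -> ebellman value q (s q) <= value q).

Lemma bellman_optimal_action q :
  exists a, isSome (p q a) /\ (value q != +oo -> ebellman value q a <= value q).
Proof.
have [->|fin] := eqVneq (value q) +oo; first by exists (a0 q); rewrite a0_enabledb.
have /fineK Er : value q \is a fin_num by rewrite ge0_fin_numE ?value_ge0 // ltey.
set r := fine (value q) in Er.
suff [a [Ha Hr]] : exists a, isSome (p q a) /\ forall n, (bellman (vi n) q a <= r)%R.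
  by exists a; split => // _; rewrite -Er; exact: ebellman_le.
apply: contrapT => none.
have above a : exists n, isSome (p q a) -> (r < bellman (vi n) q a)%R.
  case: (boolP (isSome (p q a))) => Ha; last by exists 0%N.
  apply: contrapT => Hna; apply: none; exists a; split => // n.
  by rewrite leNgt; apply/negP => Hlt; apply: Hna; exists n.
have [n_ Hn_] := choice above.
have : (r < vi (\max_(a : A) n_ a).+1 q)%R.
  apply: vi_gt => a Ha; apply: lt_le_trans (Hn_ a Ha) _.
  by apply: bellman_mono => t; apply/vi_mono/leq_bigmax.
by rewrite ltNge -lee_fin Er vi_le_value.
Qed.

Lemma exists_bellman_optimal : exists s, bellman_optimal s.
Proof. by have [s Hs] := choice bellman_optimal_action; exists s. Qed.

Section Static.
Variable s : T -> A.
Hypothesis s_opt : bellman_optimal s.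

Lemma static_valid : valid_strategy p (static_strategy R s).
Proof.
move=> h; rewrite /static_strategy; case E: (last_state h) => [//|q rest] _.
split.
- by move=> i a; case: ifP.
- move=> i a; case: ifP => [/andP [/eqP -> /eqP ->] _ | _]; last by move/eqP.
  by exists isT; rewrite (tnth_nth q) /=; case: (p q (s q)) (proj1 (s_opt q)).
- rewrite big_ord_recl [X in (_ + X)%R]big1 ?addr0; last by move=> j _; apply: big1.
  rewrite (bigD1 (s q)) //= eqxx [X in (_ + X)%R]big1 ?addr0 // => a /negbTE H.
  by rewrite H.
Qed.

Lemma static_ETotalN_cons N h q rest : last_state h = q :: rest ->
  ETotalN p c (static_strategy R s) N.+1 h =
  if p q (s q) is Some d then
    (c q (s q) + \sum_(x <- d) x.1 *
       ETotalN p c (static_strategy R s) N (extend h (0%N, s q) (x.2 ++ rest)))%R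
  else 0%R.
Proof.
move=> E; rewrite [ETotalN _ _ _ N.+1 _]/= E big_ord_recl.
rewrite [X in (_ + X)%R]big1 ?addr0; last first.
  by move=> j _; apply: big1 => a _; rewrite /static_strategy E mul0r.
rewrite (bigD1 (s q)) //= [X in (_ + X)%R]big1 ?addr0; last first.
  by move=> a /negbTE H; rewrite /static_strategy E /= H mul0r.
rewrite /static_strategy E /= eqxx mul1r (tnth_nth q) /=.
by case: (p q (s q)) => // d; rewrite /succ_state /= drop0.
Qed.

Lemma static_ETotalN_le N h :
  (ETotalN p c (static_strategy R s) N h)%:E <= \sum_(t <- last_state h) value t.
Proof.
elim: N h => [|N IH] h; first by apply: sume_ge0 => t _; apply: value_ge0.
case E: (last_state h) => [|q rest].
  by rewrite /= E big_ord0 big_nil.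
rewrite (static_ETotalN_cons _ E) big_cons.
have [En Hopt] := s_opt q; case Ed: (p q (s q)) En => [d|] // _.
have rest0 : 0 <= \sum_(t <- rest) value t by apply: sume_ge0 => t _; apply: value_ge0.
have [->|fin] := eqVneq (value q) +oo.
  by rewrite addye ?leey // gt_eqF // (lt_le_trans _ rest0) ?ltNye.
have := Hopt fin; rewrite /ebellman Ed => Hq.
apply: le_trans (_ : _ <= (c q (s q))%:E + \sum_(x <- d) (x.1)%:E *
   (\sum_(t <- x.2) value t + \sum_(t <- rest) value t)) _.
  rewrite EFinD -sumEFin leeD2l // big_seq [X in _ <= X]big_seq.
  apply: lee_sum => x xd; rewrite EFinM; apply: lee_wpmul2l; first by rewrite lee_fin (weight_ge0 Ed xd).
  by have := IH (extend h (0%N, s q) (x.2 ++ rest)); rewrite last_extend big_cat.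
have -> : \sum_(x <- d) (x.1)%:E * (\sum_(t <- x.2) value t + \sum_(t <- rest) value t) =
   \sum_(x <- d) (x.1)%:E * \sum_(t <- x.2) value t + \sum_(t <- rest) value t.
  rewrite big_seq; under eq_bigr => x xd.
    rewrite ge0_muleDr //; last by apply: sume_ge0 => t _; apply: value_ge0.
    over.
  rewrite big_split /= -big_seq; congr (_ + _).
  rewrite -ge0_sume_distrl; last by move=> x xd; rewrite lee_fin (weight_ge0 Ed).
  by rewrite sumEFin -big_seq (weight_sum Ed) mul1e.
by rewrite addeA leeD2r.
Qed.

Lemma static_le_value q : ETotal_star p c (static_strategy R s) [:: q] <= value q.
Proof.
apply: lime_le; first exact/ETotalN_cvg/static_valid.
by exists 0%N => // N _ /=; have := static_ETotalN_le N ([:: q], [::]); rewrite big_seq1.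
Qed.

End Static.

End OptimalStatic.

Theorem corollary1 (R : realType) (T A : finType)
    (p : T -> A -> option (fdist R T)) (c : T -> A -> R) :
  BMDP_wf p c ->
  exists s : T -> A,
    static_choice p s /\
    forall q : T,
      ETotal_star p c (@static_strategy R T A s) [:: q] = ETotal_opt p c [:: q].
Proof.
move=> wf.
have [a0 a0_enabled] : {a0 : T -> A & forall q, p q (a0 q) <> None}.
  by case: wf => _ H _; exact: (boolp.choice H).
have [s s_opt] := exists_bellman_optimal wf a0_enabled.
exists s; split.
  by move=> q; case: (s_opt q); case: (p q (s q)).
move=> q; apply/eqP; rewrite eq_le; apply/andP; split.
- apply: le_trans (static_le_value wf a0_enabled s_opt q) _.
  by apply/ereal_infP => _ [sigma valid <-]; exact: value_le_ETotal.
- apply: ereal_inf_lbound; exists (static_strategy R s) => //.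
  exact: static_valid s_opt.
Qed.
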